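(* For every $n\in\mathbb N$, the $n$-fold iterated group extension $\mathbb L_0\Delta_n$ (a quaternionic structure of order $n$ with $-1=1$) satisfies $\dim_{\mathbb F_2}B(\mathbb L_0\Delta_n)=\binom n2$, and the $(n-1)$-fold iterated group extension $\mathbb L_1\Delta_{n-1}$ (of order $n$, with $-1\ne1$) satisfies $\dim_{\mathbb F_2}B(\mathbb L_1\Delta_{n-1})=\binom n2+1$.
   Context: A quaternionic structure is a triple $S=(G,-1,q)$ where $G$ is a multiplicative group in which every element is its own inverse, $-1\in G$ is distinguished (possibly $-1=1$), $-a:=(-1)a$, and $q:G\times G\to Q$ is surjective onto a set $Q$ with distinguished $0$, satisfying for all $a,b,c,d$: (Q1) $q(a,-a)=0$; (Q2) $q(a,b)=q(b,a)$; (Q3) $q(a,b)=q(a,c)\iff q(a,bc)=0$; (Q4) $q(a,b)=q(c,d)\iff\exists x$: $q(a,b)=q(a,x)=q(c,x)=q(c,d)$. The order is $\dim_{\mathbb F_2}G$. The abstract 2-Brauer group $B(S)$ is the abelian group (operation $\ast$) generated by $Q$ subject only to $q(a,b)\ast q(a,c)=q(a,bc)$ for all $a,b,c\in G$. $\mathbb L_0$: $G=\{1\}$, $Q=\{0\}$. $\mathbb L_1$: $G=\{1,a\}$, $-1=a$, $Q=\{0,1\}$, $q(a,a)=1$, $q=0$ otherwise. Group extension $S\Delta=S[x]=(G\times\{1,x\},-1,q_x)$ with $\{1,x\}$ cyclic of order $2$ and $q_x(ax^\alpha,bx^\beta)=(q(a,b),(-1)^{\alpha\beta}a^\beta b^\alpha)\in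 Q\times G$, zero quaternion $(0,1)$; $S\Delta_k$ denotes the $k$-fold iterated group extension ($S\Delta_0=S$). *)

From HB Require Import structures.
From mathcomp Require Import all_boot all_order all_algebra.
Set Implicit Arguments. Unset Strict Implicit. Unset Printing Implicit Defensive.
Import GRing.Theory.
Local Open Scope ring_scope.

(* The group G (every element is its own inverse) is represented additively
   as F_2^k = 'rV['F_2]_k (group product = vector sum, 1 = 0).
   m1 is the distinguished element -1, and qv is the quaternion map; its
   values are encoded in the type seq (seq 'F_2), and the quaternion set Q
   is the image of qv (so qv is surjective onto Q by construction). *)
Record qstr (k : nat) := QStr {
  m1 : 'rV['F_2]_k;
  qv : 'rV['F_2]_k -> 'rV['F_2]_k -> seq (seq 'F_2) }.

Definition rowseq k (v : 'rV['F_2]_k) : seq 'F_2 := [seq v ord0 i | i <- enum 'I_k].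

(* G x {1,x} = F_2^(k+1): the last coordinate is the exponent of x. *)
Definition lowrow k (u : 'rV['F_2]_k.+1) : 'rV['F_2]_k :=
  \row_(j < k) u ord0 (lift ord_max j).
Definition extrow k (v : 'rV['F_2]_k) : 'rV['F_2]_k.+1 :=
  \row_(i < k.+1) match unlift ord_max i with Some j => v ord0 j | None => 0 end.

(* Group extension S[x]:
   q_x(a x^al, b x^be) = (q(a,b), (-1)^(al be) a^be b^al),
   the pair (Q value, G value) being encoded by rcons. *)
Definition ext k (S : qstr k) : qstr k.+1 :=
  QStr (extrow (m1 S))
    (fun u v =>
       let a := lowrow u in let al := u ord0 ord_max in
       let b := lowrow v in let be := v ord0 ord_max in
       rcons (qv S a b) (rowseq ((al * be) *: m1 S + be *: a + al *: b))).

Fixpoint iterExt k0 (S : qstr k0) (n : nat) : qstr (n + k0) :=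
  match n with
  | 0 => S
  | n'.+1 => ext (iterExt S n')
  end.

Definition L0 : qstr 0 := QStr 0 (fun _ _ => [::]).
(* L_1 : G = {1,a}, -1 = a, q(a,a) = 1, q = 0 otherwise. *)
Definition L1 : qstr 1 :=
  QStr (const_mx 1) (fun u v => [:: [:: u ord0 ord0 * v ord0 ord0]]).

Definition L0Delta n := iterExt L0 n.
Definition L1Delta n := iterExt L1 n.

Definition Qset k (S : qstr k) : seq (seq (seq 'F_2)) :=
  undup [seq qv S a b | a <- enum 'rV['F_2]_k, b <- enum 'rV['F_2]_k].

Definition gen k (S : qstr k) (x : seq (seq 'F_2)) : 'rV['F_2]_(size (Qset S)) :=
  \row_(i < size (Qset S)) (nth [::] (Qset S) i == x)%:R.

(* defining relation q(a,b) * q(a,c) = q(a,bc) *)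
Definition relvec k (S : qstr k) (a b c : 'rV['F_2]_k) : 'rV['F_2]_(size (Qset S)) :=
  gen S (qv S a b) + gen S (qv S a c) - gen S (qv S a (b + c)).

Definition relspace k (S : qstr k) :=
  \big[addsmx/(0 : 'M['F_2]_(size (Qset S)))]_(t : 'rV['F_2]_k * 'rV['F_2]_k * 'rV['F_2]_k)
      (genmx (relvec S t.1.1 t.1.2 t.2)).

(* dim_{F_2} B(S): B(S) = Z^(Q)/<relations> is killed by 2, so it equals
   B(S)/2B(S) = F_2^(Q)/<relations mod 2>, whose dimension is |Q| - rank. *)
Definition dimB k (S : qstr k) : nat := (size (Qset S) - \rank (relspace S))%N.

From mathcomp Require Import all_boot all_order all_algebra.
From mathcomp Require Import zify ring.
Set Implicit Arguments. Unset Strict Implicit. Unset Printing Implicit Defensive.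
Import GRing.Theory.
Local Open Scope ring_scope.

(* B(S) is the F_2-space on Q modulo the relations q(a,b) + q(a,c) = q(a,bc),
   so by bilinearity and symmetry it is spanned by the classes of q(e_i, e_j)
   with i <= j.  The j-th step of S Delta_n appends to q(a, b) the G-component
   a_j b_j (-1) + b_j a + a_j b, restricted to the coordinates below j.  Its
   entry i is bilinear in (a, b), hence a linear form on B(S), and its value on
   q(e_i', e_j') with i' < j' is the Kronecker delta at (i, j).  So the classes
   with i < j form a basis of B(L_0 Delta_n), the diagonal ones vanishing since
   q(e_i, e_i) = q(e_i, -1) and -1 = 1.  In L_1 Delta_n we have -1 = e_0, hence
   q(e_i, e_i) = q(e_i, e_0), and q(e_0, e_0) is one more basis vector, detected
   by the quaternion of L_1 itself. *)

Lemma F2_cases (x : 'F_2) : x = 0 \/ x = 1.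
Proof.
have : (val x < 2)%N := ltn_ord x.
by case: x => -[|[|//]] /= h _; [left|right]; apply/val_inj.
Qed.

Lemma F2_addxx (x : 'F_2) : x + x = 0.
Proof. by case: (F2_cases x) => ->; [rewrite addr0 | apply/val_inj]. Qed.

Lemma F2_mulxx (x : 'F_2) : x * x = x.
Proof. by case: (F2_cases x) => ->; rewrite ?mulr0 ?mulr1. Qed.

Lemma row_F2_ind k (P : 'rV['F_2]_k -> Prop) :
  P 0 -> (forall u v, P u -> P v -> P (u + v)) -> (forall j, P 'e_j) ->
  forall u, P u.
Proof.
move=> P0 PD Pe u; rewrite (row_sum_delta u).
elim/big_ind: _ => // j _.
by case: (F2_cases (u 0 j)) => ->; rewrite ?scale0r ?scale1r.
Qed.

Section Presentation.
Variables (k : nat) (S : qstr k).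
Local Notation N := (size (Qset S)).
Local Notation cls a b := (gen S (qv S a b)).

Lemma qv_in_Qset a b : qv S a b \in Qset S.
Proof. by rewrite mem_undup; apply: allpairs_f; rewrite mem_enum. Qed.

Lemma Qset_qv x : x \in Qset S -> exists a b, x = qv S a b.
Proof. by rewrite mem_undup => /allpairsP [[a b] [_ _ ->]]; exists a, b. Qed.

Lemma gen_nth (r : 'I_N) : gen S (nth [::] (Qset S) r) = 'e_r.
Proof. by apply/rowP => i; rewrite !mxE nth_uniq ?undup_uniq. Qed.

Lemma gen_mem x : x \in Qset S ->
  exists2 r : 'I_N, gen S x = 'e_r & nth [::] (Qset S) r = x.
Proof.
move=> xQ; have ltxN : (index x (Qset S) < N)%N by rewrite index_mem.
by exists (Ordinal ltxN); rewrite -?gen_nth /= nth_index.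
Qed.

Lemma relvec_sub a b c : (relvec S a b c <= relspace S)%MS.
Proof. by apply: (sumsmx_sup (a, b, c)) => //; rewrite genmxE. Qed.

Lemma cls0 a : cls a 0 = relvec S a 0 0.
Proof. by rewrite /relvec addr0 addrK. Qed.

Lemma clsD a b c : cls a (b + c) = cls a b + cls a c - relvec S a b c.
Proof. by rewrite /relvec opprB [RHS]addrC subrK. Qed.

Lemma span_cls_delta m (T : 'M_(m, N)) :
  (forall a b, qv S a b = qv S b a) -> (relspace S <= T)%MS ->
  (forall i j, (cls 'e_i 'e_j <= T)%MS) -> (1%:M <= T)%MS.
Proof.
move=> qvC relT clsT.
have relvecT a b c : (relvec S a b c <= T)%MS := submx_trans (relvec_sub a b c) relT.
have clsD_sub a b c : (cls a b <= T)%MS -> (cls a c <= T)%MS ->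
    (cls a (b + c) <= T)%MS.
  move=> abT acT; rewrite clsD addmx_sub ?(addmx_sub abT acT) //.
  by rewrite (eqmx_opp (relvec S a b c)).
have cls0_sub a : (cls a 0 <= T)%MS by rewrite cls0.
have clse_sub i : forall b, (cls 'e_i b <= T)%MS.
  by apply: row_F2_ind => // u v; apply: clsD_sub.
have cls_sub : forall a b, (cls a b <= T)%MS.
  apply: row_F2_ind => [b|u v uT vT b|//]; first by rewrite qvC.
  by rewrite qvC; apply: clsD_sub; rewrite qvC.
apply/row_subP => r; rewrite row1 -gen_nth.
by have /Qset_qv [a [b ->]] := mem_nth [::] (ltn_ord r).
Qed.

Lemma dimB_le_card (P : {pred 'I_k * 'I_k}) :
  (forall a b, qv S a b = qv S b a) ->
  (forall i j, qv S 'e_i 'e_j = qv S 'e_i 0 \/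
     exists2 p, p \in P & qv S 'e_i 'e_j = qv S 'e_p.1 'e_p.2) ->
  (dimB S <= #|P|)%N.
Proof.
move=> qvC cls_base.
pose D := (\sum_(p in P) <<cls 'e_p.1 'e_p.2>>)%MS.
have full : (1%:M <= relspace S + D)%MS.
  apply: span_cls_delta (addsmxSl _ _) _ => // i j.
  have [->|[p pP ->]] := cls_base i j.
    by rewrite cls0; apply: submx_trans (relvec_sub _ _ _) (addsmxSl _ _).
  by apply: submx_trans (addsmxSr _ _); apply: (sumsmx_sup p); rewrite ?genmxE.
have rankD : (\rank D <= #|P|)%N.
  rewrite /D -sum1_card.
  elim/big_ind2: _ => [|A1 m1 A2 m2 le1 le2|p _]; first by rewrite mxrank0.
    exact: leq_trans (mxrank_adds_leqif A1 A2).1 (leq_add le1 le2).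
  by rewrite genmxE rank_leq_row.
have := mxrankS full; rewrite mxrank1 /dimB leq_subLR => /leq_trans; apply.
exact: leq_trans (mxrank_adds_leqif _ _).1 (leq_add (leqnn _) rankD).
Qed.

Lemma card_le_dimB (P : {pred 'I_k * 'I_k})
    (crd : 'I_k * 'I_k -> seq (seq 'F_2) -> 'F_2) :
  (forall p a b c, p \in P ->
     crd p (qv S a (b + c)) = crd p (qv S a b) + crd p (qv S a c)) ->
  (forall p q, p \in P -> q \in P -> crd q (qv S 'e_p.1 'e_p.2) = (p == q)%:R) ->
  (#|P| <= dimB S)%N.
Proof.
move=> crdD crd_delta.
pose phi x := \row_(c < #|P|) crd (enum_val c) x.
pose M := \matrix_(r < N, c < #|P|) crd (enum_val c) (nth [::] (Qset S) r).
have clsM a b : cls a b *m M = phi (qv S a b).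
  have [r -> <-] := gen_mem (qv_in_Qset a b).
  by rewrite -rowE; apply/rowP => c; rewrite !mxE.
have relM : (relspace S <= kermx M)%MS.
  apply/sumsmx_subP => t _; rewrite genmxE; apply/sub_kermxP.
  rewrite /relvec mulmxBl mulmxDl !clsM; apply/rowP => c; rewrite !mxE.
  by rewrite crdD ?enum_valP // subrr.
have fullM : (1%:M <= M)%MS.
  apply/row_subP => c; rewrite row1.
  have -> : 'e_c = phi (qv S 'e_(enum_val c).1 'e_(enum_val c).2).
    apply/rowP => c'; rewrite !mxE crd_delta ?enum_valP //.
    by rewrite (inj_eq enum_val_inj) eq_sym.
  by rewrite -clsM submxMl.
have rankM : \rank M = #|P|.
  by apply/eqP; rewrite eqn_leq rank_leq_col -{1}(mxrank1 'F_2 #|P|) mxrankS.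
have := rank_leq_row M; have := mxrankS relM.
by rewrite mxrank_ker rankM /dimB; lia.
Qed.

Lemma dimB_eq_card (P : {pred 'I_k * 'I_k})
    (crd : 'I_k * 'I_k -> seq (seq 'F_2) -> 'F_2) :
  (forall a b, qv S a b = qv S b a) ->
  (forall i j, qv S 'e_i 'e_j = qv S 'e_i 0 \/
     exists2 p, p \in P & qv S 'e_i 'e_j = qv S 'e_p.1 'e_p.2) ->
  (forall p a b c, p \in P ->
     crd p (qv S a (b + c)) = crd p (qv S a b) + crd p (qv S a c)) ->
  (forall p q, p \in P -> q \in P -> crd q (qv S 'e_p.1 'e_p.2) = (p == q)%:R) ->
  dimB S = #|P|.
Proof.
move=> qvC cls_base crdD crd_delta; apply/eqP; rewrite eqn_leq.
by rewrite dimB_le_card // (card_le_dimB crdD crd_delta).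
Qed.

End Presentation.

Definition row_nth k (a : 'rV['F_2]_k) (i : nat) : 'F_2 := nth 0 (rowseq a) i.

(* For j at least the order of S, the j-th component of a quaternion of
   S Delta_n is the G-component appended by the j-th extension step. *)
Definition qentry (i j : nat) (x : seq (seq 'F_2)) : 'F_2 := nth 0 (nth [::] x j) i.

Section RowNth.
Variable k : nat.
Implicit Types a b : 'rV['F_2]_k.

Lemma size_rowseq a : size (rowseq a) = k.
Proof. by rewrite size_map size_enum_ord. Qed.

Lemma row_nth_ord a (i : 'I_k) : row_nth a i = a 0 i.
Proof.
rewrite /row_nth /rowseq (nth_map i) ?size_enum_ord // nth_ord_enum.
by congr (a _ _); apply/val_inj.
Qed.

Lemma row_nth_default a i : (k <= i)%N -> row_nth a i = 0.
Proof. by move=> le_k_i; rewrite /row_nth nth_default // size_rowseq. Qed.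

Lemma row_nthZ c a i : row_nth (c *: a) i = c * row_nth a i.
Proof.
have [lt_i_k|le_k_i] := ltnP i k; last by rewrite !row_nth_default ?mulr0.
by rewrite -[i]/(val (Ordinal lt_i_k)) !row_nth_ord mxE.
Qed.

Lemma row_nthD a b i : row_nth (a + b) i = row_nth a i + row_nth b i.
Proof.
have [lt_i_k|le_k_i] := ltnP i k; last by rewrite !row_nth_default ?addr0.
by rewrite -[i]/(val (Ordinal lt_i_k)) !row_nth_ord mxE.
Qed.

Lemma row_nth0 i : row_nth (0 : 'rV_k) i = 0.
Proof. by rewrite -(scale0r 0) row_nthZ mul0r. Qed.

Lemma row_nth_delta (j : 'I_k) i : row_nth 'e_j i = (i == j)%:R.
Proof.
have [lt_i_k|le_k_i] := ltnP i k.
  by rewrite -[i]/(val (Ordinal lt_i_k)) row_nth_ord mxE.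
by rewrite row_nth_default //; case: eqP => // eq_ij; move: le_k_i; rewrite eq_ij leqNgt ltn_ord.
Qed.

Lemma eq_row_nth a b : (forall i, (i < k)%N -> row_nth a i = row_nth b i) -> a = b.
Proof. by move=> eq_ab; apply/rowP => j; rewrite -!row_nth_ord eq_ab. Qed.

End RowNth.

Lemma row_nth_lowrow k (u : 'rV['F_2]_k.+1) i :
  (i < k)%N -> row_nth (lowrow u) i = row_nth u i.
Proof.
move=> lt_i_k; rewrite -[i]/(val (Ordinal lt_i_k)) row_nth_ord mxE.
rewrite -[i]/(val (Ordinal (leqW lt_i_k))) row_nth_ord; congr (u _ _).
by apply/val_inj; rewrite /= /bump leqNgt lt_i_k.
Qed.

Lemma row_nth_last k (u : 'rV['F_2]_k.+1) : row_nth u k = u 0 ord_max.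
Proof. by rewrite -[k]/(val (@ord_max k)) row_nth_ord. Qed.

Lemma row_nth_extrow k (v : 'rV['F_2]_k) i : row_nth (extrow v) i = row_nth v i.
Proof.
have [lt_i_k1|le_k1_i] := ltnP i k.+1; last by rewrite !row_nth_default // ltnW.
rewrite -[i]/(val (Ordinal lt_i_k1)) row_nth_ord mxE.
case: unliftP => [j /(congr1 val) /= ->|/(congr1 val) /= ->].
  by rewrite /bump leqNgt ltn_ord add0n row_nth_ord.
by rewrite row_nth_default.
Qed.

Lemma lowrow_extrow k (v : 'rV['F_2]_k) : lowrow (extrow v) = v.
Proof. by apply: eq_row_nth => i lt_i_k; rewrite row_nth_lowrow // row_nth_extrow. Qed.

Lemma extrow_last k (v : 'rV['F_2]_k) : (extrow v) 0 ord_max = 0.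
Proof. by rewrite -row_nth_last row_nth_extrow row_nth_default. Qed.

Lemma qv_ext k (S : qstr k) u v :
  qv (ext S) u v =
  rcons (qv S (lowrow u) (lowrow v))
    (rowseq ((u 0 ord_max * v 0 ord_max) *: m1 S
             + v 0 ord_max *: lowrow u + u 0 ord_max *: lowrow v)).
Proof. by []. Qed.

Lemma F2_pair_delta (i j i' j' : nat) (m : 'F_2) :
  (i < j \/ i = j /\ j < j')%N -> (i' < j')%N ->
  (j' == i)%:R * (j' == j)%:R * m + (j' == j)%:R * (i' == i)%:R
    + (j' == i)%:R * (i' == j)%:R = ((i' == i) && (j' == j))%:R.
Proof.
move=> p_cases lt_q.
case: (j' =P i) => ?; case: (j' =P j) => ?; case: (i' =P i) => ?; case: (i' =P j) => ?;
  rewrite /= ?(mulr0n, mulr1n, mul0r, mulr0, mul1r, mulr1, add0r, addr0) //; lia.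
Qed.

Section IterExt.
Variables (k0 : nat) (S : qstr k0).

Lemma iterExt_sym : (forall a b, qv S a b = qv S b a) ->
  forall n a b, qv (iterExt S n) a b = qv (iterExt S n) b a.
Proof.
move=> qvC; elim=> [|n IHn] a b; first exact: qvC.
rewrite !qv_ext IHn mulrC; congr (rcons _ (rowseq _)).
exact: addrAC.
Qed.

Lemma row_nth_m1_iterExt n i : row_nth (m1 (iterExt S n)) i = row_nth (m1 S) i.
Proof. by elim: n => [|n IHn] //=; rewrite row_nth_extrow. Qed.

Lemma iterExt_diag : (forall a, qv S a a = qv S a (m1 S)) ->
  forall n a, qv (iterExt S n) a a = qv (iterExt S n) a (m1 (iterExt S n)).
Proof.
move=> qv_diag; elim=> [|n IHn] a; first exact: qv_diag.
rewrite !qv_ext lowrow_extrow extrow_last IHn; congr (rcons _ (rowseq _)).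
apply: eq_row_nth => i _; rewrite !row_nthD !row_nthZ F2_mulxx.
by rewrite -addrA -mulrDr F2_addxx !mulr0 !mul0r !addr0 add0r.
Qed.

Hypothesis size_qv : forall a b, size (qv S a b) = k0.

Lemma size_qv_iterExt n a b : size (qv (iterExt S n) a b) = (n + k0)%N.
Proof. by elim: n a b => [|n IHn] a b //=; rewrite size_rcons IHn. Qed.

Lemma qentry_iterExt n (a b : 'rV_(n + k0)) i j :
  (i < j)%N -> (k0 <= j)%N -> (j < n + k0)%N ->
  qentry i j (qv (iterExt S n) a b) =
  row_nth a j * row_nth b j * row_nth (m1 S) i
    + row_nth b j * row_nth a i + row_nth a j * row_nth b i.
Proof.
elim: n a b => [|n IHn] a b lt_ij le_k0_j lt_j_nk0; first by lia.
rewrite /qentry /= nth_rcons size_qv_iterExt.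
have [lt_j_n|le_n_j] := ltnP j (n + k0).
  by rewrite -/(qentry _ _ _) IHn // !row_nth_lowrow //; lia.
have -> : j = (n + k0)%N by lia.
have lt_i_nk0 : (i < n + k0)%N by lia.
rewrite eqxx -/(row_nth _ i) !row_nthD !row_nthZ !row_nth_lowrow //.
by rewrite row_nth_m1_iterExt !row_nth_last.
Qed.

Lemma qentry_iterExtD n (q : 'I_(n + k0) * 'I_(n + k0)) a b c :
  (q.1 < q.2)%N -> (k0 <= q.2)%N ->
  qentry q.1 q.2 (qv (iterExt S n) a (b + c)) =
  qentry q.1 q.2 (qv (iterExt S n) a b) + qentry q.1 q.2 (qv (iterExt S n) a c).
Proof. by move=> lt_q le_k0_q; rewrite !qentry_iterExt // !row_nthD; ring. Qed.

Lemma qentry_iterExt_delta n (p q : 'I_(n + k0) * 'I_(n + k0)) :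
  (q.1 < q.2)%N -> (k0 <= q.2)%N ->
  (p.1 < p.2)%N \/ (p.1 = p.2 :> nat /\ (p.2 < k0)%N) ->
  qentry q.1 q.2 (qv (iterExt S n) 'e_p.1 'e_p.2) = (p == q)%:R.
Proof.
case: p q => [i j] [i' j'] /= lt_q le_k0_q p_cases.
rewrite qentry_iterExt // !row_nth_delta F2_pair_delta //; last by lia.
by rewrite xpair_eqE (eq_sym i) (eq_sym j).
Qed.

End IterExt.

Lemma card_strict_pairs m : #|[pred p : 'I_m * 'I_m | (p.1 < p.2)%N]| = 'C(m, 2).
Proof.
rewrite -sum1_card -(pair_big_dep xpredT (fun i j : 'I_m => i < j)%N (fun _ _ => 1%N)) /=.
rewrite (exchange_big_dep xpredT) //= -bin2_sum big_mkord.
apply: eq_bigr => j _; rewrite -(big_ord_widen m (fun=> 1%N) (ltnW (ltn_ord j))).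
by rewrite sum1_card card_ord.
Qed.

Lemma dimB_L0Delta n : dimB (L0Delta n) = 'C(n, 2).
Proof.
have size_qv (a b : 'rV_0) : size (qv L0 a b) = 0%N by [].
have qvC a b : qv (L0Delta n) a b = qv (L0Delta n) b a by apply: iterExt_sym.
have m1_0 : m1 (L0Delta n) = 0.
  by apply: eq_row_nth => i _; rewrite row_nth_m1_iterExt !row_nth0.
rewrite -[in RHS](addn0 n) -card_strict_pairs.
apply: (dimB_eq_card (crd := fun p => qentry p.1 p.2) qvC) => [i j|p a b c|p q].
- have [lt_ij|lt_ji|/val_inj <-] := ltngtP i j.
  + by right; exists (i, j).
  + by right; exists (j, i); rewrite // qvC.
  + by left; rewrite iterExt_diag // m1_0.
- by rewrite inE => lt_p; apply: qentry_iterExtD.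
- by rewrite !inE => lt_p lt_q; apply: qentry_iterExt_delta => //; left.
Qed.

Lemma row_nth_m1_L1 i : row_nth (m1 L1) i = (i == 0%N)%:R.
Proof.
case: i => [|i]; last by rewrite row_nth_default.
by rewrite -[0%N]/(val (@ord0 0)) row_nth_ord mxE.
Qed.

Lemma qentry00_L1Delta n (a b : 'rV_(n + 1)) :
  qentry 0 0 (qv (L1Delta n) a b) = row_nth a 0 * row_nth b 0.
Proof.
elim: n a b => [|n IHn] a b; first by rewrite /qentry /= -[0%N]/(val (@ord0 0)) !row_nth_ord.
have size_qv (u v : 'rV_1) : size (qv L1 u v) = 1%N by [].
have lt0 : (0 < n + 1)%N by rewrite addn1.
rewrite /qentry /L1Delta /= nth_rcons size_qv_iterExt // lt0.
by rewrite -/(qentry 0 0 _) IHn !row_nth_lowrow.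
Qed.

Lemma dimB_L1Delta n : dimB (L1Delta n) = ('C(n.+1, 2) + 1)%N.
Proof.
have size_qv (a b : 'rV_1) : size (qv L1 a b) = 1%N by [].
have lt0 : (0 < n + 1)%N by rewrite addn1.
pose z := Ordinal lt0.
pose P := [predU1 (z, z) & [pred p : 'I_(n + 1) * 'I_(n + 1) | (p.1 < p.2)%N]].
have qvC a b : qv (L1Delta n) a b = qv (L1Delta n) b a.
  by apply: iterExt_sym => u v; rewrite /= mulrC.
have m1_z : m1 (L1Delta n) = 'e_z.
  by apply: eq_row_nth => i _; rewrite row_nth_m1_iterExt row_nth_m1_L1 row_nth_delta.
have -> : ('C(n.+1, 2) + 1)%N = #|P| by rewrite cardU1 card_strict_pairs inE /= addnC addn1.
apply: (dimB_eq_card (crd := fun p => qentry p.1 p.2) qvC) => [i j|p a b c|p q].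
- right; have [lt_ij|lt_ji|/val_inj <-] := ltngtP i j.
  + by exists (i, j); rewrite // !inE lt_ij orbT.
  + by exists (j, i); [rewrite !inE lt_ji orbT | apply: qvC].
  + rewrite iterExt_diag; last by move=> a; rewrite /= mxE F2_mulxx mulr1.
    rewrite m1_z; have [i0|i_gt0] := posnP i.
      by exists (z, z); rewrite ?inE ?eqxx //; congr (qv _ 'e_ _ _); apply/val_inj.
    by exists (z, i); [rewrite !inE i_gt0 orbT | apply: qvC].
- rewrite !inE => /predU1P [-> | lt_p]; last first.
    by apply: qentry_iterExtD => //; apply: leq_ltn_trans lt_p.
  by rewrite /= !qentry00_L1Delta !row_nthD mulrDr.
- rewrite !inE => p_cases /predU1P [-> | lt_q].
    case: p {p_cases} => i j; rewrite /= qentry00_L1Delta !row_nth_delta.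
    by rewrite -natrM mulnb xpair_eqE !(eq_sym 0%N).
  apply: qentry_iterExt_delta => //; first exact: leq_ltn_trans lt_q.
  by case/predU1P: p_cases => [-> | lt_p]; [right | left].
Qed.

Theorem corollary4 (n : nat) :
  dimB (L0Delta n) = 'C(n, 2) /\
  (0 < n -> dimB (L1Delta n.-1) = 'C(n, 2) + 1)%N.
Proof.
split; first exact: dimB_L0Delta.
by case: n => [//|n] _; exact: dimB_L1Delta.
Qed.
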